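(* Let $R:\ \mu=\rho^{(0)}\to\dots\to\rho^{(l)}=\nu$ be a sequence of diagrams and let $T\in\mathcal{T}(\lambda,R)$ be $\nu$-bounded. Then $\rho(\alpha)_{T(\alpha)}>c(\alpha)$ for all boxes $\alpha\in\lambda$ with $T(\alpha)$ unbarred.
   Context: Partitions are identified with Young diagrams; box $(i,j)$ is in row $i$, column $j$; content $c(\alpha)=j-i$; $\nu'_j$ is the length of column $j$ of $\nu$. A reverse $\lambda$-tableau is a filling $T$ of $\lambda$ by positive integers weakly decreasing along rows and strictly decreasing down columns. $\rho\to\sigma$ means $\sigma$ is obtained from $\rho$ by adding one box; for $R:\ \mu=\rho^{(0)}\to\dots\to\rho^{(l)}=\nu$, $r_i$ is the row of the box added to $\rho^{(i-1)}$. Column order: columns left to right, within a column bottom to top; $\prec$ is strict precedence. $\mathcal{T}(\lambda,R)$ consists of reverse $\lambda$-tableaux $T$ with chosen boxes $\alpha_1\prec\dots\prec\alpha_l$ such that $T(\alpha_i)=r_i$; those entries are barred, the rest unbarred. For $\alpha$ with $\alpha_i\prec\alpha\prec\alpha_{i+1}$ ($0\le i\le l$, conditions with $\alpha_0,\alpha_{l+1}$ void), $\rho(\alpha)=\rho^{(i)}$, and $\rho(\alpha)_k$ is the length of row $k$ of $\rho(\alpha)$. $T$ is $\nu$-bounded if $T(1,j)\le\nu'_j$ for all $j=1,\dots,\lambda_1$. *)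

From mathcomp Require Import all_boot all_order all_algebra.
Set Implicit Arguments. Unset Strict Implicit. Unset Printing Implicit Defensive.
Import GRing.Theory Num.Theory.

Definition is_partition (p : seq nat) : bool :=
  sorted geq p && all (fun x => 0 < x) p.

(* Length of row k (1-indexed) of the diagram p. *)
Definition rowlen (p : seq nat) (k : nat) : nat := nth 0 p k.-1.

Definition collen (p : seq nat) (j : nat) : nat := count (fun r => j <= r) p.

(* Boxes are pairs (i, j) = (row, column), 1-indexed. *)
Definition in_diag (p : seq nat) (a : nat * nat) : bool :=
  [&& 0 < a.1, 0 < a.2 & a.2 <= rowlen p a.1].

Definition content (a : nat * nat) : int := (a.2%:Z - a.1%:Z)%R.

(* The sequence R : mu = rho^(0) -> ... -> rho^(l), encoded by mu and the
   rows r_1, ..., r_l of the added boxes; rho^(i) adds one box to rows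
   r_1..r_i successively. *)
Definition rho (mu : seq nat) (rs : seq nat) (i : nat) : seq nat :=
  foldl (fun p r => incr_nth p r.-1) mu (take i rs).

(* Validity of R: all rho^(i) are partitions (so each step adds one box to a
   diagram, giving a diagram), rows are positive. *)
Definition valid_chain (mu : seq nat) (rs : seq nat) : Prop :=
  all (fun r => 0 < r) rs /\ forall i, i <= size rs -> is_partition (rho mu rs i).

Definition reverse_tableau (lam : seq nat) (T : nat -> nat -> nat) : Prop :=
  [/\ forall a, in_diag lam a -> 0 < T a.1 a.2,
      forall i j, in_diag lam (i, j.+1) -> T i j.+1 <= T i j
    & forall i j, in_diag lam (i.+1, j) -> T i.+1 j < T i j].

Definition colprec (a b : nat * nat) : bool :=
  (a.2 < b.2) || ((a.2 == b.2) && (b.1 < a.1)).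

(* (T, al) in T(lambda, R): al = [alpha_1; ...; alpha_l] chosen boxes,
   strictly increasing in column order, with T(alpha_i) = r_i. *)
Definition in_TlamR (lam mu rs : seq nat) (T : nat -> nat -> nat)
    (al : seq (nat * nat)) : Prop :=
  [/\ reverse_tableau lam T,
      size al = size rs,
      all (in_diag lam) al,
      sorted colprec al
    & forall i, i < size rs -> T (nth (0, 0) al i).1 (nth (0, 0) al i).2 = nth 0 rs i].

(* rho(alpha) = rho^(i) where alpha_i < alpha < alpha_{i+1}, i.e. i is the
   number of chosen boxes preceding alpha. *)
Definition rho_at (mu rs : seq nat) (al : seq (nat * nat)) (a : nat * nat) :=
  rho mu rs (count (fun b => colprec b a) al).

Definition nu_bounded (lam nu : seq nat) (T : nat -> nat -> nat) : Prop :=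
  forall j, 1 <= j <= rowlen lam 1 -> T 1 j <= collen nu j.

From mathcomp Require Import all_boot all_order all_algebra zify.
Import GRing.Theory Num.Theory.
Set Implicit Arguments. Unset Strict Implicit.

(* Let a = (i, j) be an unbarred box and t = T(a).  Since the
   entries of T decrease down columns and T is nu-bounded, T(a) <= T(1,j)
   <= nu'_j, i.e. row t of nu has length at least j.  Passing from rho(a)
   to nu adds one box to row t for every barred box b after a (in column
   order) with T(b) = t.  Such boxes lie strictly to the right of column j
   (within column j, equal entries would contradict strict column decrease),
   they lie in pairwise distinct columns for the same reason, and each of
   their columns is at most nu_t by the same boundedness argument.  Hence
   there are at most nu_t - j of them, so rho(a)_t >= j > j - i = c(a). *)

Lemma geq_trans : transitive geq.
Proof. by move=> x y z /= le_yx le_zy; exact: leq_trans le_zy le_yx. Qed.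

Lemma rowlen_mono lam p q : is_partition lam -> 0 < q -> q <= p ->
  rowlen lam p <= rowlen lam q.
Proof.
move=> /andP[sorted_lam _] q_gt0 le_qp; rewrite /rowlen.
have le_pred : q.-1 <= p.-1 by rewrite -!subn1 leq_sub2r.
have [p_lt|p_large] := ltnP p.-1 (size lam); last by rewrite nth_default.
apply: (sorted_leq_nth geq_trans (fun x => leqnn x) 0 sorted_lam) => //.
exact: leq_ltn_trans p_lt.
Qed.

Lemma in_diag_up lam p q j : is_partition lam -> 0 < q -> q <= p ->
  in_diag lam (p, j) -> in_diag lam (q, j).
Proof.
move=> lamP q_gt0 le_qp /and3P[/= _ j_gt0 j_le]; apply/and3P; split => //=.
by apply: (leq_trans j_le); apply: rowlen_mono.
Qed.

Lemma prefix_count (T : eqType) (e : rel T) (P : pred T) (s : seq T) x0 :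
  transitive e -> sorted e s -> (forall x y, e x y -> P y -> P x) ->
  forall k, k < size s -> P (nth x0 s k) = (k < count P s).
Proof.
move=> e_trans; elim: s => [//|x s IH] /= sorted_xs P_down k k_lt.
have x_min := order_path_min e_trans sorted_xs.
case Px: (P x).
  case: k k_lt => [|k] k_lt /=; first by rewrite Px.
  by rewrite IH // (path_sorted sorted_xs).
have notP_s : forall y, y \in s -> ~~ P y.
  move=> y y_s; apply/negP => Py; move/allP: x_min => /(_ y y_s) exy.
  by rewrite (P_down _ _ exy Py) in Px.
have -> : count P s = 0.
  by apply/eqP; rewrite -leqn0 leqNgt -has_count; apply/hasPn.
case: k k_lt => [|k] k_lt /=; first by rewrite Px.
by apply/negbTE/notP_s/mem_nth.
Qed.

Lemma notP_drop_count (T : eqType) (e : rel T) (P : pred T) (s : seq T) :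
  transitive e -> sorted e s -> (forall x y, e x y -> P y -> P x) ->
  forall x, x \in drop (count P s) s -> ~~ P x.
Proof.
move=> e_trans sorted_s P_down x; case: s sorted_s => [//|x0 s'] sorted_s.
move=> /(nthP x0) [k k_lt <-]; rewrite nth_drop.
have k_lt' : count P (x0 :: s') + k < size (x0 :: s').
  by move: k_lt; rewrite size_drop ltn_subRL.
by rewrite (prefix_count x0 e_trans sorted_s P_down k_lt') -leqNgt leq_addr.
Qed.

Lemma colprec_trans : transitive colprec.
Proof.
move=> [y1 y2] [x1 x2] [z1 z2]; rewrite /colprec /=.
case/orP=> [lt1|/andP[/eqP eq1 lt1]]; case/orP=> [lt2|/andP[/eqP eq2 lt2]].
- by rewrite (ltn_trans lt1 lt2).
- by subst; rewrite lt1.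
- by subst; rewrite lt2.
- by subst; rewrite eqxx (ltn_trans lt2 lt1) orbT.
Qed.

Lemma colprec_irr : irreflexive colprec.
Proof. by move=> [x1 x2]; rewrite /colprec /= ltnn eqxx ltnn. Qed.

Lemma colprec_total x y : x != y -> ~~ colprec y x -> colprec x y.
Proof.
case: x y => [x1 x2] [y1 y2]; rewrite /colprec /= => neq_xy.
case: (ltngtP x2 y2) => // eq2; subst; rewrite -leqNgt => le_yx.
by rewrite ltn_neqAle le_yx andbT; apply: contra neq_xy => /eqP ->.
Qed.

Lemma collen_row nu t j : is_partition nu -> 0 < t -> t <= collen nu j ->
  j <= rowlen nu t.
Proof.
move=> /andP[sorted_nu _] t_gt0 t_le; rewrite /rowlen.
have t_lt : t.-1 < count (fun r => j <= r) nu by rewrite prednK.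
have t_size : t.-1 < size nu by apply: leq_trans t_lt (count_size _ _).
rewrite (prefix_count 0 geq_trans sorted_nu _ t_size) //.
by move=> x y /= le_yx le_jy; apply: leq_trans le_jy le_yx.
Qed.

Lemma rho_row mu rs n t : all (fun r => 0 < r) rs -> 0 < t ->
  rowlen (rho mu rs n) t = rowlen mu t + count (pred1 t) (take n rs).
Proof.
rewrite /rho /rowlen => rs_pos t_gt0.
have : all (fun r => 0 < r) (take n rs).
  by apply/allP => x /mem_take x_rs; move/allP: rs_pos; apply.
elim: (take n rs) mu => [|r s IH] mu /=; first by rewrite addn0.
move=> /andP[r_gt0 s_pos].
have eq_pred : (r.-1 == t.-1) = (r == t).
  by apply/eqP/eqP => [E|->] //; rewrite -(prednK r_gt0) -(prednK t_gt0) E.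
by rewrite IH // nth_incr_nth eq_pred /= addnCA addnA.
Qed.

Lemma rho_row_split mu rs c t : all (fun r => 0 < r) rs -> 0 < t ->
  rowlen (rho mu rs (size rs)) t
  = rowlen (rho mu rs c) t + count (pred1 t) (drop c rs).
Proof.
move=> rs_pos t_gt0.
by rewrite !rho_row // take_size -addnA -count_cat cat_take_drop.
Qed.

Section ReverseTableau.

Variables (lam : seq nat) (T : nat -> nat -> nat).
Hypotheses (lamP : is_partition lam) (TP : reverse_tableau lam T).

Lemma col_strict p q j : 0 < q -> q < p -> in_diag lam (p, j) -> T p j < T q j.
Proof.
have [_ _ col_dec] := TP; move=> q_gt0; elim: p => [//|p IH] lt_qp pj_in.
have le_qp : q <= p by [].
case: (ltngtP q p) => [lt_qp'|gt_qp|eq_qp]; last by rewrite eq_qp; exact: col_dec.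
- apply: ltn_trans (col_dec _ _ pj_in) (IH lt_qp' _).
  by apply: in_diag_up pj_in => //; apply: leq_trans q_gt0 le_qp.
- by rewrite leqNgt gt_qp in le_qp.
Qed.

Lemma col_entry_inj p q j : in_diag lam (p, j) -> in_diag lam (q, j) ->
  T p j = T q j -> p = q.
Proof.
move=> pj_in qj_in eqT.
have [/and3P[/= p_gt0 _ _] /and3P[/= q_gt0 _ _]] := conj pj_in qj_in.
case: (ltngtP p q) => // [lt_pq|lt_qp].
- by have := col_strict p_gt0 lt_pq qj_in; rewrite eqT ltnn.
- by have := col_strict q_gt0 lt_qp pj_in; rewrite eqT ltnn.
Qed.

(* A box b later than a in column order with the same entry lies in a
   column strictly to the right of a: within the column of a, the later
   boxes are those above a, whose entries are larger. *)
Lemma later_same_entry_right a b : in_diag lam a -> in_diag lam b ->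
  colprec a b -> T b.1 b.2 = T a.1 a.2 -> a.2 < b.2.
Proof.
case: a b => [i j] [p q] /= a_in b_in.
rewrite /colprec /= => /orP[// | /andP[/eqP eq_col lt_pi]] eqT; subst q.
by rewrite (col_entry_inj b_in a_in eqT) ltnn in lt_pi.
Qed.

Variable nu : seq nat.
Hypotheses (nuP : is_partition nu) (T_bounded : nu_bounded lam nu T).

(* Every box b of lam lies within row T(b) of nu, because
   T(b) <= T(1, b.2) <= nu'_(b.2). *)
Lemma col_bound b : in_diag lam b -> b.2 <= rowlen nu (T b.1 b.2).
Proof.
have [T_pos _ _] := TP.
case: b => [p q] b_in /=; have /and3P[/= p_gt0 q_gt0 q_le] := b_in.
apply: collen_row => //; first exact: T_pos b_in.
have T_le_top : T p q <= T 1 q.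
  case: (ltngtP 1 p) => [lt_1p|lt_p1|<-//].
  - exact: ltnW (col_strict (ltn0Sn 0) lt_1p b_in).
  - by rewrite ltnNge p_gt0 in lt_p1.
apply: leq_trans T_le_top (T_bounded _).
by rewrite q_gt0 /= (leq_trans q_le) // rowlen_mono.
Qed.

(* Distinct boxes with entry t lie in distinct columns between j+1 and
   nu_t; so if all of them are right of column j there are at most
   nu_t - j of them. *)
Lemma same_entry_count (F : seq (nat * nat)) t j : uniq F ->
  (forall b, b \in F -> [/\ in_diag lam b, T b.1 b.2 = t & j < b.2]) ->
  size F <= rowlen nu t - j.
Proof.
move=> F_uniq F_boxes.
have cols_uniq : uniq (map snd F).
  rewrite map_inj_in_uniq // => [[p q] [p' q']] b_F b'_F /= eq_col; subst q'.
  have [b_in Tb _] := F_boxes _ b_F; have [b'_in Tb' _] := F_boxes _ b'_F.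
  by rewrite (col_entry_inj b_in b'_in) //= Tb Tb'.
have cols_range : {subset map snd F <= iota j.+1 (rowlen nu t - j)}.
  move=> q /mapP[b b_F ->]; have [b_in Tb lt_jb] := F_boxes _ b_F.
  have b_le : b.2 <= rowlen nu t by rewrite -Tb col_bound.
  by rewrite mem_iota lt_jb /= addSn subnKC ?ltnS // (leq_trans (ltnW lt_jb)).
by have := uniq_leq_size cols_uniq cols_range; rewrite size_map size_iota.
Qed.

End ReverseTableau.

Unset Implicit Arguments.

Theorem lemma2p5 (lam mu rs : seq nat) (T : nat -> nat -> nat)
    (al : seq (nat * nat)) :
  is_partition lam ->
  valid_chain mu rs ->
  in_TlamR lam mu rs T al ->
  nu_bounded lam (rho mu rs (size rs)) T ->
  forall a : nat * nat, in_diag lam a -> a \notin al ->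
    (content a < (rowlen (rho_at mu rs al a) (T a.1 a.2))%:Z)%R.
Proof.
move=> lamP [rs_pos chainP] [TP size_al al_in al_sorted al_entries] T_bounded.
move=> [i j] a_in a_notin; rewrite /rho_at /=.
set nu := rho mu rs (size rs); have nuP : is_partition nu := chainP _ (leqnn _).
set t := T i j; have t_gt0 : 0 < t by have [T_pos _ _] := TP; exact: (T_pos (i, j)).
set c := count (fun b => colprec b (i, j)) al.
have rs_entries : rs = map (fun b => T b.1 b.2) al.
  apply: (eq_from_nth (x0 := 0)); first by rewrite size_map size_al.
  by move=> k k_lt; rewrite (nth_map (0, 0)) ?al_entries // size_al.
(* F: the chosen boxes after a with entry t, one per box added to row t *)
set F := [seq b <- drop c al | T b.1 b.2 == t].
have nu_split : rowlen nu t = rowlen (rho mu rs c) t + size F.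
  by rewrite (rho_row_split mu c) // rs_entries -map_drop count_map size_filter.
have F_boxes b : b \in F -> [/\ in_diag lam b, T b.1 b.2 = t & j < b.2].
  rewrite mem_filter => /andP[/eqP Tb b_later].
  have b_in : in_diag lam b by move/allP: al_in; apply; exact: mem_drop b_later.
  split=> //; apply: (later_same_entry_right lamP TP a_in b_in) => //.
  apply: colprec_total; first by apply: contraNneq a_notin => ->; exact: mem_drop b_later.
  apply: (notP_drop_count colprec_trans al_sorted) b_later.
  by move=> x y; apply: colprec_trans.
have F_uniq : uniq F.
  by rewrite filter_uniq // drop_uniq // (sorted_uniq colprec_trans colprec_irr).
have F_small := same_entry_count lamP TP nuP T_bounded F_uniq F_boxes.
have j_le_nu : j <= rowlen nu t := col_bound lamP TP nuP T_bounded a_in.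
have /and3P[/= i_gt0 _ _] := a_in.
rewrite /content /= ltrBlDr -PoszD ltz_nat.
rewrite nu_split in F_small j_le_nu; lia.
Qed.
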